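(* Let $\phi:\mathbb{R}^{d}\to\mathbb{R}^{d}$ be a $C^{2}$ diffeomorphism, $x_{1}\in\mathbb{R}^{d}$ and $x_{j}=\phi^{j-1}(x_{1})$. If $x_{1},\ldots,x_{D-1}$ are distinct, then the $(D-1)\times D_{\alpha}$ matrix $V(x_{1})$ (defined in the context) has rank $D-1$, i.e. rank equal to its number of rows.
   Context: $\pi_{1}$ is the first coordinate projection, $\mathbf{e}_{1}=(1,0,\ldots,0)$. For a multi-index $\alpha\in\mathbb{Z}_{\geq0}^{d}$, $p_{\alpha}(x)=\prod_i(\pi_{i}x)^{\alpha_{i}}$; $\mathcal{I}_{2D-1}$ is the set of multi-indices with $|\alpha|=\sum_i\alpha_i\leq2D-1$, of cardinality $D_{\alpha}$. For $c=(c_{\alpha})\in\mathbb{R}^{D_{\alpha}}$ let $\phi_{c}(x)=\phi(x)+\mathbf{e}_{1}\sum_{\alpha\in\mathcal{I}_{2D-1}}c_{\alpha}p_{\alpha}(x)$. The matrix $V(x_{1})$ has rows $j=1,\ldots,D-1$ equal to the gradient with respect to $c$ at $c=0$ of $c\mapsto\pi_{1}\phi_{c}^{j}(x_{1})$; equivalently, with $F_{c}(x_{1})=(\pi_{1}x_{1},\pi_{1}\phi_{c}(x_{1}),\ldots,\pi_{1}\phi_{c}^{D-1}(x_{1}))$, one has $F_{c}(x_{1})=F_{0}(x_{1})+\binom{0}{V(x_{1})}c+O(\|c\|^{2})$. *)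

From HB Require Import structures.
From mathcomp Require Import all_boot all_order all_algebra.
From mathcomp Require Import all_classical all_reals all_analysis.
Set Implicit Arguments. Unset Strict Implicit. Unset Printing Implicit Defensive.
Import Order.TTheory GRing.Theory Num.Theory.
Import numFieldNormedType.Exports.
Local Open Scope ring_scope.

Section Defs.
Variable R : realType.

Definition C2 (m : nat) (f : 'rV[R]_m -> 'rV[R]_m) : Prop :=
  continuous f /\
  (forall u x, derivable f x u) /\ (forall u, continuous ('D_u f)) /\
  (forall u v x, derivable ('D_u f) x v) /\
  (forall u v, continuous ('D_v ('D_u f))).

Definition C2_diffeo (m : nat) (f : 'rV[R]_m -> 'rV[R]_m) : Prop :=
  C2 f /\ exists g : 'rV[R]_m -> 'rV[R]_m, [/\ cancel f g, cancel g f & C2 g].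

(* Multi-indices alpha in Z_{>=0}^{d+1} with |alpha| <= 2D-1.
   Each entry is automatically <= 2D-1 < 2D. *)
Definition multi_index (d D : nat) : finType :=
  {a : {ffun 'I_d.+1 -> 'I_(2 * D)} | \sum_(i < d.+1) (a i : nat) <= (2 * D).-1}%N.

(* D_alpha := #|multi_index d D| *)

Definition p_alpha (d D : nat) (a : multi_index d D) (x : 'rV[R]_d.+1) : R :=
  \prod_(i < d.+1) (x ord0 i) ^+ (val a i : nat).

Definition e1 (d : nat) : 'rV[R]_d.+1 := \row_(i < d.+1) ((i == ord0)%:R).

Definition phi_c (d D : nat) (phi : 'rV[R]_d.+1 -> 'rV[R]_d.+1)
  (c : 'rV[R]_#|multi_index d D|) (x : 'rV[R]_d.+1) : 'rV[R]_d.+1 :=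
  phi x + (\sum_(a : multi_index d D) c ord0 (enum_rank a) * p_alpha a x) *: e1 d.

Definition basis_c (n : nat) (k : 'I_n) : 'rV[R]_n := \row_(l < n) ((l == k)%:R).

(* V(x_1): (D-1) x D_alpha matrix; row j (j = i+1, i : 'I_(D-1)) is the gradient
   in c at c = 0 of c |-> pi_1 (phi_c^j (x_1)), i.e. its partial derivatives. *)
Definition Vmx (d D : nat) (phi : 'rV[R]_d.+1 -> 'rV[R]_d.+1) (x1 : 'rV[R]_d.+1)
  : 'M[R]_(D.-1, #|multi_index d D|) :=
  \matrix_(i < D.-1, k < #|multi_index d D|)
    ('D_(basis_c k) (fun c : 'rV[R]_#|multi_index d D| =>
        (iter i.+1 (phi_c phi c) x1) ord0 ord0) 0).

End Defs.

From HB Require Import structures.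
From mathcomp Require Import all_boot all_order all_algebra.
From mathcomp Require Import all_classical all_reals all_analysis.
From mathcomp Require Import ring zify.
Import Order.TTheory GRing.Theory Num.Theory.
Import numFieldNormedType.Exports.
Set Implicit Arguments. Unset Strict Implicit. Unset Printing Implicit Defensive.
Local Open Scope ring_scope.

(* Let y_j := phi^j(x1) and let orbit_c j c be the j-th iterate of x1 under phi_c, so that row i of
   V is the derivative at c = 0 of the first coordinate of orbit_c (i+1). The perturbation
   phi_c - phi is linear in c and vanishes at c = 0, so the chain rule gives
     d/dc_k orbit_c (j+1) = dphi(y_j) (d/dc_k orbit_c j) + p_k(y_j) e1.
   Hence V = L P with P(m, k) = p_k(y_m) and L lower triangular whose diagonal entries are the
   first coordinate of e1, i.e. 1. P has full row rank because monomials of degree at most 2D-1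
   separate the D-1 distinct points y_0, ..., y_(D-2): a product of D-2 affine functions
   vanishes at all of them but one. The chain rule needs phi to be differentiable, which follows
   from the continuity of its partial derivatives. *)

Section line_derivatives.
Variables (R : realType) (V : normedModType R).

Lemma is_derive_line (W : normedModType R) (f : V -> W) (z v : V) (s : R) :
  derivable f (z + s *: v) v ->
  is_derive s 1 (fun t : R => f (z + t *: v)) ('D_v f (z + s *: v)).
Proof.
have quotE : (fun h : R => h^-1 *: ((fun t => f (z + t *: v)) (h *: 1 + s) - f (z + s *: v)))
    = (fun h : R => h^-1 *: (f (h *: v + (z + s *: v)) - f (z + s *: v))).
  by apply/funext => h; rewrite [h *: 1]mulr1 scalerDl addrCA addrA addrC.
move=> fv; apply: DeriveDef; first by rewrite /derivable /= quotE.
by rewrite /derive /= quotE.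
Qed.

Lemma is_derive_line_entry m n (f : V -> 'M[R]_(m, n)) (z v : V) (s : R) i j :
  derivable f (z + s *: v) v ->
  is_derive s 1 (fun t : R => f (z + t *: v) i j) ('D_v f (z + s *: v) i j).
Proof.
move=> /is_derive_line fline; rewrite -(@derive_val _ _ _ _ _ _ _ fline).
apply: DeriveDef; first by move/derivable_mxP: (@ex_derive _ _ _ _ _ _ _ fline); apply.
by rewrite derive_mx // mxE.
Qed.

Lemma MVT_origin (u du : R -> R) : (forall x : R, is_derive x (1 : R) u (du x)) ->
  forall t, exists2 c, `|c| <= `|t| & u t - u 0 = du c * t.
Proof.
move=> u'.
have uc : continuous u.
  by move=> x; apply/differentiable_continuous/derivable1_diffP.
move=> t; have [t0|t0] := leP 0 t.
  have [c /andP[c0 ct] ->] :=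
    MVT_segment t0 (fun x _ => u' x) (continuous_subspaceT uc).
  by exists c; rewrite ?subr0 // !ger0_norm // (le_trans c0).
have [c /andP[tc c0] uE] :=
  MVT_segment (ltW t0) (fun x _ => u' x) (continuous_subspaceT uc).
exists c; last by rewrite -opprB uE sub0r mulrN opprK.
by rewrite !ler0_norm ?lerN2 // ?(ltW t0) // (le_trans tc).
Qed.

End line_derivatives.

Section continuous_partials.
Variable R : realType.

Lemma mx_norm_entry p q (M : 'M[R]_(p, q)) i j : `|M i j| <= `|M|.
Proof.
have /mapP[k _ ->] : `|M i j| \in [seq `|M k.1 k.2| | k : 'I_p * 'I_q].
  by apply/mapP; exists (i, j); rewrite ?mem_enum.
by rewrite [leRHS]/Num.norm /= mx_normrE; apply/bigmax_geP; right; exists k.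
Qed.

Lemma mx_norm_le p q (M : 'M[R]_(p, q)) c :
  0 <= c -> (forall i j, `|M i j| <= c) -> `|M| <= c.
Proof.
move=> c0 Mc; rewrite [leLHS]/Num.norm /= mx_normrE.
by apply/bigmax_leP; split => // -[i j] _; apply: Mc.
Qed.

Variables n m : nat.
Implicit Types h y : 'rV[R]_n.

Definition row_prefix (h : 'rV[R]_n) (k : nat) : 'rV[R]_n :=
  \row_l (if (l < k)%N then h 0 l else 0).

Lemma row_prefix0 h : row_prefix h 0 = 0.
Proof. by apply/rowP => l; rewrite !mxE. Qed.

Lemma row_prefix_full h : row_prefix h n = h.
Proof. by apply/rowP => l; rewrite !mxE ltn_ord. Qed.

Lemma row_prefixS h (i : 'I_n) :
  row_prefix h i.+1 = row_prefix h i + h 0 i *: 'e_i.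
Proof.
apply/rowP => l; rewrite !mxE ltnS leq_eqVlt eqxx /= -val_eqE.
by case: (ltngtP l i) => [li|il|/val_inj ->] /=; rewrite ?mulr1 ?mulr0 ?addr0 ?add0r ?ltnn.
Qed.

Lemma norm_row_prefix_shift h (i : 'I_n) (c : R) :
  `|c| <= `|h 0 i| -> `|row_prefix h i + c *: 'e_i| <= `|h|.
Proof.
move=> ch; apply: mx_norm_le => // i0 l; rewrite (ord1 i0) !mxE eqxx /= -val_eqE.
case: (ltngtP l i) => _; rewrite ?mulr0 ?addr0 ?mx_norm_entry ?normr0 //.
by rewrite add0r mulr1 (le_trans ch) ?mx_norm_entry.
Qed.

Definition partial_jacobian (f : 'rV[R]_n -> 'rV[R]_m) (y : 'rV[R]_n) :
  'M[R]_(n, m) := \matrix_(i < n) 'D_('e_i) f y.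

(* Telescope along the path y, y + h_0 e_0, ..., y + h and apply the mean value theorem
   on each edge. *)
Lemma partial_increment_le (f : 'rV[R]_n -> 'rV[R]_m) y h (e : R) :
  (forall x i, derivable f x ('e_i)) -> 0 <= e ->
  (forall z, `|z - y| <= `|h| ->
     forall i, `|'D_('e_i) f z - 'D_('e_i) f y| <= e) ->
  `|f (y + h) - f y - h *m partial_jacobian f y| <= n%:R * e * `|h|.
Proof.
move=> fi e0 De; apply: mx_norm_le => [|i0 r]; first by rewrite !mulr_ge0.
rewrite (ord1 i0) !mxE.
set P := fun k : nat => f (y + row_prefix h k) 0 r.
have -> : f (y + h) 0 r - f y 0 r = \sum_(i < n) (P i.+1 - P i).
  rewrite -(big_mkord xpredT (fun i => P i.+1 - P i)) telescope_sumr //.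
  by rewrite /P row_prefix_full row_prefix0 addr0.
rewrite -sumrB -mulrA mulr_natl -[X in _ *+ X]card_ord -sumr_const.
apply: le_trans (ler_norm_sum _ _ _) _; apply: ler_sum => i _.
pose z := y + row_prefix h i.
have [c ch PE] :=
  MVT_origin (fun t => is_derive_line_entry 0 r (fi (z + t *: 'e_i) i)) (h 0 i).
rewrite /P row_prefixS addrA -/z (_ : f z 0 r = f (z + 0 *: 'e_i) 0 r);
  last by rewrite scale0r addr0.
rewrite PE [_ * h 0 i]mulrC /partial_jacobian mxE -mulrBr normrM mulrC.
apply: ler_pM => //; last exact: mx_norm_entry.
have := mx_norm_entry ('D_('e_i) f (z + c *: 'e_i) - 'D_('e_i) f y) 0 r.
rewrite !mxE => /le_trans; apply; apply: De.
by rewrite /z addrAC [y + _]addrC addrK norm_row_prefix_shift.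
Qed.

Lemma differentiable_partials (f : 'rV[R]_n -> 'rV[R]_m) :
  (forall x i, derivable f x 'e_i) -> (forall i, continuous ('D_'e_i f)) ->
  forall y, differentiable f y.
Proof.
move=> fi Dc y; set J := partial_jacobian f y.
have Jc : continuous (@mulmxr R 1 n m J).
  have -> : @mulmxr R 1 n m J = (fun h => \sum_(i < n) h 0 i *: row i J).
    by apply/funext => h; rewrite /= mulmx_sum_row.
  apply: (@continuous_big _ _ +%R 0 xpredT add_continuous) => i _ h.
  exact/continuousZr_tmp/coord_continuous.
have Jo : f \o shift y = cst (f y) + @mulmxr R 1 n m J +o_ (0 : 'rV[R]_n) id.
  apply/eqaddoP => _/posnumP[e].
  pose e' := e%:num / (n%:R + 1).
  have e'0 : 0 < e' by rewrite divr_gt0 // ltr_wpDl.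
  have : \forall z \near y, forall i, `|'D_'e_i f z - 'D_'e_i f y| <= e'.
    apply: (@filter_forall _ _ (fun i z => `|'D_'e_i f z - 'D_'e_i f y| <= e') (nbhs y) _) => i.
    have /cvgrPdist_le /(_ _ e'0) := Dc i y.
    by apply: filter_app; near=> z => Dz; rewrite distrC.
  move=> /nbhs_ballP [del del0 Dnear]; apply/nbhs_ballP; exists del => // h.
  rewrite -ball_normE /= sub0r normrN => hdel.
  have -> : (f \o shift y - (cst (f y) + mulmxr J)) h = f (y + h) - f y - h *m J.
    by rewrite [y + h]addrC opprD addrA.
  apply: le_trans (partial_increment_le fi (ltW e'0) _) _.
    move=> z zy; apply: Dnear; rewrite -ball_normE /= distrC.
    exact: le_lt_trans zy hdel.
  apply: ler_wpM2r => //; rewrite /e' mulrCA; apply: ler_piMr => //.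
  by rewrite ler_pdivrMr ?ltr_wpDl // mul1r lerDl.
by apply/diff_locallyP; rewrite (diff_unique Jc Jo).
Unshelve. all: by end_near. Qed.
End continuous_partials.

Section derive_rules.
Variables (R : realType) (V W : normedModType R).

Lemma differentiable_big_sum (I : Type) (r : seq I) (g : I -> V -> W) x :
  (forall i, differentiable (g i) x) ->
  differentiable (fun z => \sum_(i <- r) g i z) x.
Proof.
move=> gx; elim: r => [|i r IHr].
  under eq_fun do rewrite big_nil; exact: differentiable_cst.
under eq_fun do rewrite big_cons; exact: differentiableD.
Qed.

Lemma derive_big_sum (I : Type) (r : seq I) (g : I -> V -> W) x v :
  (forall i, differentiable (g i) x) ->
  'D_v (fun z => \sum_(i <- r) g i z) x = \sum_(i <- r) 'D_v (g i) x.
Proof.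
move=> gx; elim: r => [|i r IHr].
  by under eq_fun do rewrite big_nil; rewrite derive_cst big_nil.
under eq_fun do rewrite big_cons.
rewrite deriveD ?big_cons ?IHr //; apply: diff_derivable => //.
exact: differentiable_big_sum.
Qed.

Lemma derive_comp (U : normedModType R) (f : V -> U) (g : U -> W) x v :
  differentiable f x -> differentiable g (f x) ->
  'D_v (g \o f) x = 'd g (f x) ('D_v f x).
Proof.
move=> fx gfx; rewrite (deriveE _ (differentiable_comp fx gfx)) (deriveE _ fx).
by rewrite diff_comp.
Qed.

Lemma deriveZl (k : V -> R) (w : W) x v :
  differentiable k x -> 'D_v (fun z => k z *: w) x = 'D_v k x *: w.
Proof.
by move=> kx; rewrite !deriveE // ?diffZl //; apply: differentiableZl.
Qed.

End derive_rules.

Lemma derive_entry (R : realType) m n (x v : 'M[R]_(m, n)) i j :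
  'D_v (fun z : 'M[R]_(m, n) => z i j) x = v i j.
Proof.
have := derive_mx (@derivable_id _ _ x v).
by move/(congr1 (fun M : 'M[R]_(m, n) => M i j)); rewrite derive_id mxE.
Qed.

Section monomials.
Variables (R : idomainType) (n : nat).

Definition monomial (e : 'I_n -> nat) (x : 'rV[R]_n) : R := \prod_i x 0 i ^+ e i.

Lemma monomial0 x : monomial (fun _ => 0%N) x = 1.
Proof. by apply: big1 => i _; rewrite expr0. Qed.

Lemma monomial_bump e (j : 'I_n) x :
  monomial (fun i => e i + (i == j))%N x = monomial e x * x 0 j.
Proof.
rewrite /monomial (eq_bigr (fun i => x 0 i ^+ e i * x 0 i ^+ (i == j))) => [|i _];
  last by rewrite exprD.
rewrite big_split /=; congr (_ * _).
by rewrite (bigD1 j) //= eqxx expr1 big1 ?mulr1 // => i /negbTE ->.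
Qed.

End monomials.

Lemma differentiable_monomial (R : realType) n (e : 'I_n -> nat) (x : 'rV[R]_n) :
  differentiable (monomial e) x.
Proof.
rewrite /monomial -fct_prodE; elim/big_ind: _ => // [F G|i _].
  exact: differentiableM.
case: (e i) => [|k].
  have -> : (fun y : 'rV[R]_n => y 0 i ^+ 0) = cst 1 by apply/funext => y.
  exact: differentiable_cst.
rewrite -exprfctE; exact/differentiableX/differentiable_coord.
Qed.

Section interpolation.
Variables (R : idomainType) (n K B : nat) (y : 'I_K -> 'rV[R]_n.+1) (v : 'rV[R]_K).
Hypothesis v_monomial0 :
  forall e, (\sum_i e i <= B)%N -> \sum_m v 0 m * monomial e (y m) = 0.

Lemma affine_products_vanish (s : seq ('I_n.+1 * R)) e :
  (size s + \sum_i e i <= B)%N ->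
  \sum_m v 0 m * ((\prod_(q <- s) (y m 0 q.1 - q.2)) * monomial e (y m)) = 0.
Proof.
elim: s e => [|q s IHs] e /= sB.
  by under eq_bigr do rewrite big_nil mul1r; apply: v_monomial0.
have delta1 : (\sum_(i < n.+1) (i == q.1) = 1)%N.
  by rewrite (bigD1 q.1) //= eqxx big1 // => i /negbTE ->.
have sBe : (size s + \sum_i (e i + (i == q.1)) <= B)%N.
  by rewrite big_split /= delta1; lia.
under eq_bigr do rewrite big_cons.
rewrite (eq_bigr (fun m => v 0 m * ((\prod_(r <- s) (y m 0 r.1 - r.2)) *
      monomial (fun i => e i + (i == q.1))%N (y m))
   - q.2 * (v 0 m * ((\prod_(r <- s) (y m 0 r.1 - r.2)) * monomial e (y m)))));
  last by move=> m _; rewrite monomial_bump; ring.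
by rewrite sumrB -mulr_sumr !IHs ?mulr0 ?subr0 // ltnW // -addSn.
Qed.

Lemma distinct_points_monomial_free : injective y -> (K <= B.+1)%N -> v = 0.
Proof.
move=> y_inj KB; apply/rowP => m0; rewrite mxE.
(* The affine factor x_(sep l) - y l (sep l), l != m0, vanishes at y l but not at y m0. *)
pose sep l := odflt ord0 [pick i | y l 0 i != y m0 0 i].
have sepP l : l != m0 -> y l 0 (sep l) != y m0 0 (sep l).
  move=> lm0; rewrite /sep; case: pickP => [i /= -> //|same].
  by case/eqP: lm0; apply: y_inj; apply/rowP => i; apply/eqP/negbFE/same.
pose s := [seq (sep l, y l 0 (sep l)) | l <- enum (predC1 m0)].
have := @affine_products_vanish s (fun _ => 0%N).
rewrite big1 // addn0 size_map -cardE cardC1 card_ord => /(_ ltac:(lia)).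
under eq_bigr do rewrite monomial0 mulr1 big_map big_enum.
rewrite (bigD1 m0) //= [X in _ + X]big1 ?addr0 => [|m mm0]; last first.
  by rewrite (bigD1 m) //= subrr mul0r mulr0.
move/eqP; rewrite mulf_eq0 => /orP[/eqP //|/prodf_eq0[l /= lm0]].
by rewrite subr_eq0 eq_sym (negbTE (sepP l lm0)).
Qed.

End interpolation.

Lemma multi_index_of_degree (d D : nat) (e : 'I_d.+1 -> nat) :
  (0 < D)%N -> (\sum_i e i <= (2 * D).-1)%N ->
  exists a : multi_index d D, forall i, val a i = e i :> nat.
Proof.
move=> D_gt0 eB.
have e_lt i : (e i < 2 * D)%N.
  have : (e i <= \sum_j e j)%N by rewrite (bigD1 i) //= leq_addr.
  lia.
have aB : (\sum_i ([ffun i => Ordinal (e_lt i)] i : nat) <= (2 * D).-1)%N.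
  by under eq_bigr do rewrite ffunE.
pose a : multi_index d D :=
  exist (fun a : {ffun 'I_d.+1 -> 'I_(2 * D)} => \sum_i (a i : nat) <= (2 * D).-1)%N _ aB.
by exists a => i; rewrite /= ffunE.
Qed.

Section perturbed_orbit.
Variables (R : realType) (d D : nat) (phi : 'rV[R]_d.+1 -> 'rV[R]_d.+1).
Variable x1 : 'rV[R]_d.+1.
Hypothesis phi_diff : forall y, differentiable phi y.
Local Notation N := #|multi_index d D|.

Definition perturbation (c : 'rV[R]_N) (y : 'rV[R]_d.+1) : R :=
  \sum_(a : multi_index d D) c 0 (enum_rank a) * p_alpha a y.

Lemma phi_c0 : phi_c (D := D) phi 0 = phi.
Proof.
apply/funext => y; rewrite /phi_c big1 ?scale0r ?addr0 // => a _.
by rewrite mxE mul0r.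
Qed.

Section along.
Variable F : 'rV[R]_N -> 'rV[R]_d.+1.
Hypothesis F_diff : differentiable F 0.

Let coord_diff a : differentiable (fun c : 'rV[R]_N => c 0 (enum_rank a)) 0.
Proof. exact: differentiable_coord. Qed.

Let p_alpha_F_diff (a : multi_index d D) : differentiable (p_alpha a \o F) 0.
Proof. by apply: differentiable_comp => //; apply: differentiable_monomial. Qed.

Lemma differentiable_perturbation : differentiable (fun c => perturbation c (F c)) 0.
Proof.
by apply: differentiable_big_sum => a; exact: (differentiableM (coord_diff a) (p_alpha_F_diff a)).
Qed.

Lemma derive_perturbation k :
  'D_(basis_c R k) (fun c => perturbation c (F c)) 0 = p_alpha (enum_val k) (F 0).
Proof.
rewrite derive_big_sum => [|a]; last exact: (differentiableM (coord_diff a) (p_alpha_F_diff a)).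
under eq_bigr => a _.
  rewrite (@deriveM _ _ (fun c : 'rV[R]_N => c 0 (enum_rank a)) (p_alpha a \o F));
    [|exact: diff_derivable..].
  rewrite derive_entry !mxE scale0r add0r.
  over.
rewrite (bigD1 (enum_val k)) //= enum_valK eqxx big1 ?addr0 => [|a ak]; first exact: mulr1.
have -> : (enum_rank a == k) = false.
  by rewrite -(inj_eq enum_val_inj) enum_rankK (negbTE ak).
exact: mulr0.
Qed.

End along.

Definition orbit_c j (c : 'rV[R]_N) : 'rV[R]_d.+1 := iter j (phi_c phi c) x1.

Lemma orbit_cS j :
  orbit_c j.+1 = phi \o orbit_c j + (fun c => perturbation c (orbit_c j c) *: e1 R d).
Proof. by []. Qed.

Lemma orbit_c_at0 j : orbit_c j 0 = iter j phi x1.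
Proof. by rewrite /orbit_c phi_c0. Qed.

Lemma differentiable_orbit_c j : differentiable (orbit_c j) 0.
Proof.
elim: j => [|j IHj]; first exact: differentiable_cst.
rewrite orbit_cS; apply: differentiableD; first exact: differentiable_comp.
exact/differentiableZl/differentiable_perturbation.
Qed.

Lemma derive_orbit_cS j k :
  'D_(basis_c R k) (orbit_c j.+1) 0 =
  'd phi (iter j phi x1) ('D_(basis_c R k) (orbit_c j) 0)
  + p_alpha (enum_val k) (iter j phi x1) *: e1 R d.
Proof.
have Oj := differentiable_orbit_c j.
have Pj := differentiable_perturbation Oj.
rewrite orbit_cS deriveD; last 2 first.
- exact/diff_derivable/differentiable_comp.
- exact/diff_derivable/differentiableZl.
by rewrite derive_comp // orbit_c_at0 deriveZl // derive_perturbation // orbit_c_at0.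
Qed.

(* For m < j, push_e1 j m = dphi(y_(j-1)) (... (dphi(y_(m+1)) e1)) with y_k := iter k phi x1;
   the values for m >= j are never used. *)
Fixpoint push_e1 (j m : nat) : 'rV[R]_d.+1 :=
  if j is j'.+1 then
    if m == j' then e1 R d else 'd phi (iter j' phi x1) (push_e1 j' m)
  else 0.

Lemma derive_orbit_c j k :
  'D_(basis_c R k) (orbit_c j) 0 =
  \sum_(m < j) p_alpha (enum_val k) (iter m phi x1) *: push_e1 j m.
Proof.
elim: j => [|j IHj]; first by rewrite big_ord0 (derive_cst x1).
rewrite derive_orbit_cS IHj linear_sum big_ord_recr /= eqxx; congr (_ + _).
by apply: eq_bigr => m _; rewrite linearZ /= ltn_eqF.
Qed.

Definition push_mx : 'M[R]_D.-1 :=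
  \matrix_(i, m) (if (m <= i)%N then push_e1 i.+1 m 0 0 else 0).

Definition monomial_mx : 'M[R]_(D.-1, N) :=
  \matrix_(m, k) p_alpha (enum_val k) (iter m phi x1).

Lemma Vmx_entry (i : 'I_D.-1) k :
  Vmx D phi x1 i k =
  \sum_(m < i.+1) p_alpha (enum_val k) (iter m phi x1) * push_e1 i.+1 m 0 0.
Proof.
have Oder : derivable (orbit_c i.+1) 0 (basis_c R k).
  exact/diff_derivable/differentiable_orbit_c.
rewrite mxE; transitivity ('D_(basis_c R k) (orbit_c i.+1) 0 0 0).
  by rewrite [in RHS](derive_mx Oder) mxE.
by rewrite derive_orbit_c summxE; apply: eq_bigr => m _; rewrite mxE.
Qed.

Lemma Vmx_factor : Vmx D phi x1 = push_mx *m monomial_mx.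
Proof.
apply/matrixP => i k; rewrite Vmx_entry !mxE.
rewrite (big_ord_widen D.-1
  (fun m => p_alpha (enum_val k) (iter m phi x1) * push_e1 i.+1 m 0 0)) //.
rewrite big_mkcond; apply: eq_bigr => m _; rewrite !mxE ltnS.
by case: ifP => _; rewrite ?mul0r // mulrC.
Qed.

Lemma push_mx_unit : push_mx \in unitmx.
Proof.
rewrite unitmxE det_trig; last by apply/is_trig_mxP => i j ij; rewrite mxE leqNgt ij.
by rewrite big1 ?unitr1 // => i _; rewrite mxE leqnn /= eqxx mxE eqxx.
Qed.

Lemma monomial_mx_row_free :
  (forall i j : 'I_D.-1, iter i phi x1 = iter j phi x1 -> i = j) ->
  row_free monomial_mx.
Proof.
move=> orbit_inj; apply/inj_row_free => v vM0.
have [D0|D_gt0] := posnP D; first by apply/rowP => m; exfalso; have := ltn_ord m; lia.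
apply: (@distinct_points_monomial_free _ _ _ (2 * D).-1 (fun m => iter m phi x1))
  => [e eB|i j /orbit_inj //|]; last lia.
have [a aE] := multi_index_of_degree D_gt0 eB.
move/rowP: vM0 => /(_ (enum_rank a)); rewrite !mxE => vMa.
rewrite -[RHS]vMa; apply: eq_bigr => m _; rewrite mxE enum_rankK; congr (_ * _).
by apply: eq_bigr => i _; rewrite aE.
Qed.

End perturbed_orbit.

Theorem lemma10 (R : realType) (d D : nat)
  (phi : 'rV[R]_d.+1 -> 'rV[R]_d.+1) (x1 : 'rV[R]_d.+1) :
  C2_diffeo phi ->
  (forall i j : 'I_D.-1, iter i phi x1 = iter j phi x1 -> i = j) ->
  \rank (Vmx D phi x1) = D.-1.
Proof.
move=> [[_ [phi_der [Dphi_cont _]]] _] orbit_inj.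
have phi_diff := differentiable_partials (fun x i => phi_der 'e_i x) (fun i => Dphi_cont 'e_i).
rewrite (Vmx_factor D x1 phi_diff) mxrankMfree ?mxrank_unit ?push_mx_unit //.
exact: monomial_mx_row_free.
Qed.
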